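(* $\mathrm{Sort}(\mathrm{SC}_{\underline{23}1})$ is not a permutation class.
   Context: $\mathfrak S_n$ is the set of permutations of $\{1,\dots,n\}$. A permutation $\pi$ contains a (classical) permutation $\tau$ if some subsequence of $\pi$ has the same relative order as $\tau$. A permutation class is a set $\Pi$ of permutations such that every permutation contained in some $\pi\in\Pi$ is also in $\Pi$. A vincular pattern is a permutation with some entries underlined; a sequence contains it if it has a subsequence with the same relative order in which entries corresponding to adjacent underlined entries occupy consecutive positions. An occurrence of $\underline{23}1$ is $a_j a_{j+1} a_l$ with $l>j+1$ and $a_l<a_j<a_{j+1}$. For a pattern $\sigma$, the map $\mathrm{SC}_\sigma$ acts on $\tau$: read entries left to right; when the next entry $x$ is read, if pushing $x$ yields a stack whose entries read top to bottom (stack adjacency = consecutive positions) avoid $\sigma$, push $x$; otherwise pop the top stack entry to the output and repeat. At the end pop all remaining entries; the output is $\mathrm{SC}_\sigma(\tau)$. West's stack-sorting map is $s=\mathrm{SC}_{21}$. $\mathrm{Sort}_n(\mathrm{SC}_\sigma)=\{\tau\in\mathfrak S_n : s(\mathrm{SC}_\sigma(\tau))=12\cdots n\}$ and $\mathrm{Sort}(\mathrm{SC}_\sigma)=\bigcup_{n\ge1}\mathrm{Sort}_n(\mathrm{SC}_\sigma)$. *)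

From mathcomp Require Import all_boot.
Set Implicit Arguments. Unset Strict Implicit. Unset Printing Implicit Defensive.

(* Permutations in one-line notation are sequences of naturals. *)

Definition is_perm_of (n : nat) (s : seq nat) : bool := perm_eq s (iota 1 n).

Definition is_permutation (s : seq nat) : Prop := exists n, 0 < n /\ is_perm_of n s.

Definition same_order (a b : seq nat) : bool :=
  (size a == size b) &&
  all (fun i => all (fun j => (nth 0 a i < nth 0 a j) == (nth 0 b i < nth 0 b j))
                    (iota 0 (size a))) (iota 0 (size a)).

Definition contains (pi tau : seq nat) : Prop :=
  exists m : bitseq, same_order (mask m pi) tau.

Definition is_perm_class (Pi : seq nat -> Prop) : Prop :=
  (forall pi, Pi pi -> is_permutation pi) /\
  (forall pi tau, Pi pi -> is_permutation tau -> contains pi tau -> Pi tau).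

Definition contains_21 (s : seq nat) : bool :=
  has (fun i => has (fun j => nth 0 s j < nth 0 s i) (iota i.+1 (size s - i.+1)))
      (iota 0 (size s)).

(* s contains the vincular pattern \underline{23}1:
   positions j, j+1, l with l > j+1 and s_l < s_j < s_{j+1} *)
Definition contains_23u1 (s : seq nat) : bool :=
  has (fun j => has (fun l => (nth 0 s l < nth 0 s j) && (nth 0 s j < nth 0 s j.+1))
                    (iota j.+2 (size s - j.+2)))
      (iota 0 (size s)).

(* The pattern-avoiding stack machine SC_sigma, where [bad] tests whether
   a sequence contains sigma.  The stack is a seq with its head the top,
   so the stack read top to bottom is the seq itself. *)
Fixpoint sc_insert (bad : seq nat -> bool) (x : nat) (st out : seq nat)
  : seq nat * seq nat :=
  if ~~ bad (x :: st) then (x :: st, out)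
  else match st with
       | [::] => (x :: st, out) (* never reached for patterns of length >= 2 *)
       | y :: st' => sc_insert bad x st' (rcons out y)
       end.

Fixpoint sc_run (bad : seq nat -> bool) (input st out : seq nat) : seq nat :=
  match input with
  | [::] => out ++ st
  | x :: input' =>
      let: (st', out') := sc_insert bad x st out in sc_run bad input' st' out'
  end.

Definition SC (bad : seq nat -> bool) (tau : seq nat) : seq nat :=
  sc_run bad tau [::] [::].

Definition west (tau : seq nat) : seq nat := SC contains_21 tau.

Definition SC_23u1 (tau : seq nat) : seq nat := SC contains_23u1 tau.

Definition Sort_SC_23u1 (tau : seq nat) : Prop :=
  exists n, 0 < n /\ is_perm_of n tau /\ west (SC_23u1 tau) = iota 1 n.

From mathcomp Require Import all_boot.

(* Sorting by SC_23u1 followed by West's map is not closed under pattern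
   containment: SC_23u1 sends 25314 to 54132, which West's map sorts, while its
   pattern 2413 is sent to 3142, on which West's map returns 1324. *)

Definition sort_SC_23u1b (s : seq nat) : bool :=
  [&& 0 < size s, is_perm_of (size s) s & west (SC_23u1 s) == iota 1 (size s)].

Lemma Sort_SC_23u1P (s : seq nat) : reflect (Sort_SC_23u1 s) (sort_SC_23u1b s).
Proof.
apply: (iffP and3P) => [[s_gt0 s_perm /eqP s_sorted] | [n [n_gt0 [s_perm s_sorted]]]].
  by exists (size s).
have size_s : size s = n by rewrite (perm_size s_perm) size_iota.
by rewrite size_s n_gt0 s_perm s_sorted.
Qed.

Lemma not_perm_class_of_witness (Pi : seq nat -> Prop) (pi tau : seq nat) :
  Pi pi -> is_permutation tau -> contains pi tau -> ~ Pi tau -> ~ is_perm_class Pi.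
Proof. by move=> Pi_pi tau_perm pi_tau Pi'tau [_ /(_ pi tau Pi_pi tau_perm pi_tau)]. Qed.

Lemma Sort_SC_23u1_25314 : Sort_SC_23u1 [:: 2; 5; 3; 1; 4].
Proof. by apply/Sort_SC_23u1P; vm_compute. Qed.

Lemma not_Sort_SC_23u1_2413 : ~ Sort_SC_23u1 [:: 2; 4; 1; 3].
Proof. by move/Sort_SC_23u1P; vm_compute. Qed.

Lemma is_permutation_2413 : is_permutation [:: 2; 4; 1; 3].
Proof. by exists 4; vm_compute. Qed.

Lemma contains_25314_2413 : contains [:: 2; 5; 3; 1; 4] [:: 2; 4; 1; 3].
Proof. by exists [:: true; true; false; true; true]; vm_compute. Qed.

Theorem mainTheorem17 : ~ is_perm_class Sort_SC_23u1.
Proof.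
exact: not_perm_class_of_witness Sort_SC_23u1_25314 is_permutation_2413
  contains_25314_2413 not_Sort_SC_23u1_2413.
Qed.
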